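(* Let $(\Gamma,\rho)$ be a voltage graph with $\Gamma$ strongly connected and $G$ a finite group. Then $(\Gamma,\rho)$ is structurally balanced if and only if $f(c)=\mathbf 1$ for every cycle $c$ of $\Gamma$.
   Context: $\Gamma=(V,E)$ simple digraph, $e_{ij}$ the edge $v_i\to v_j$, $\rho:E\to G$, $\mathbf 1$ the identity. Semi-walk $w=v_{i_1}a_1\dots a_{n-1}v_{i_n}$ with each $a_j\in\{e_{i_ji_{j+1}},e_{i_{j+1}i_j}\}$; walk if all $a_j=e_{i_ji_{j+1}}$; closed if $v_{i_1}=v_{i_n}$. A cycle is a closed walk with no repeated vertices except start equals end (a single vertex is a trivial cycle). Net voltage $f(w)=\bar\rho(a_1)\cdots\bar\rho(a_{n-1})$ with $\bar\rho(a_j)=\rho(a_j)$ for forward edges and $\rho(a_j)^{-1}$ for backward ones ($f=\mathbf 1$ on a single vertex). Structurally balanced: $f(w)=\mathbf 1$ for every closed semi-walk. Strongly connected: for every ordered pair of distinct vertices there is a walk from the first to the second. *)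

From mathcomp Require Import all_boot fingroup.
Set Implicit Arguments. Unset Strict Implicit. Unset Printing Implicit Defensive.
Local Open Scope group_scope.

(* A digraph on a finite vertex type V is a relation E : rel V
   (E u v  <=>  the edge u -> v exists). A voltage assignment
   rho : V -> V -> gT is only ever read on edges (rho u v = rho(e_uv)).

   A semi-walk starting at x is encoded by a sequence of steps (y, b):
   b = true  : traverse the edge prev -> y forward   (requires E prev y),
   b = false : traverse the edge y -> prev backward  (requires E y prev). *)

Section Voltage.
Variables (V : finType) (gT : finGroupType).
Variables (E : rel V) (rho : V -> V -> gT).

Fixpoint semiwalk (x : V) (s : seq (V * bool)) : bool :=
  match s with
  | [::] => true
  | (y, b) :: s' => (if b then E x y else E y x) && semiwalk y s'
  end.

Definition sw_end (x : V) (s : seq (V * bool)) : V := last x (map fst s).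

Definition is_walk (x : V) (s : seq (V * bool)) : bool :=
  semiwalk x s && all snd s.

Fixpoint net_voltage (x : V) (s : seq (V * bool)) : gT :=
  match s with
  | [::] => 1
  | (y, b) :: s' =>
      (if b then rho x y else (rho y x)^-1) * net_voltage y s'
  end.

(* cycle: closed walk with no repeated vertices except start = end;
   the empty step list is the trivial cycle *)
Definition is_cycle (x : V) (s : seq (V * bool)) : bool :=
  [&& is_walk x s, sw_end x s == x & uniq (map fst s)].

Definition structurally_balanced : Prop :=
  forall x s, semiwalk x s -> sw_end x s = x -> net_voltage x s = 1.

Definition strongly_connected : Prop :=
  forall u v : V, u != v ->
    exists s, is_walk u s /\ sw_end u s = v.

End Voltage.

(* A semi-walk becomes a walk with the same endpoints and voltage once every
   backward edge u <- v is replaced by a walk from v to u, which exists by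
   strong connectivity; closing such a walk with the edge u -> v gives a
   closed walk, so its voltage is rho(u,v)^-1 as soon as closed walks are
   balanced.  Closed walks reduce to cycles by cutting them at a repeated
   vertex into two shorter closed walks. *)

From mathcomp Require Import all_boot fingroup zify.
Set Implicit Arguments. Unset Strict Implicit. Unset Printing Implicit Defensive.
Local Open Scope group_scope.

Section VoltageWalks.
Variables (V : finType) (gT : finGroupType).
Variables (E : rel V) (rho : V -> V -> gT).

Lemma sw_end_cat (x : V) s1 s2 : sw_end x (s1 ++ s2) = sw_end (sw_end x s1) s2.
Proof. by rewrite /sw_end map_cat last_cat. Qed.

Lemma semiwalk_cat (x : V) s1 s2 :
  semiwalk E x (s1 ++ s2) = semiwalk E x s1 && semiwalk E (sw_end x s1) s2.
Proof. by elim: s1 x => [|[y b] s IH] x //=; rewrite IH andbA. Qed.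

Lemma is_walk_cat (x : V) s1 s2 :
  is_walk E x (s1 ++ s2) = is_walk E x s1 && is_walk E (sw_end x s1) s2.
Proof.
rewrite /is_walk semiwalk_cat all_cat.
by case: (semiwalk _ _ s1) (semiwalk _ _ s2) (all snd s1) => [] [] [].
Qed.

Lemma net_voltage_cat (x : V) s1 s2 :
  net_voltage rho x (s1 ++ s2) =
  net_voltage rho x s1 * net_voltage rho (sw_end x s1) s2.
Proof.
by elim: s1 x => [|[y b] s IH] x /=; rewrite ?mul1g // IH mulgA.
Qed.

Lemma closed_subwalk_of_not_uniq (x : V) (s : seq (V * bool)) :
  ~~ uniq (map fst s) ->
  exists s1 s2 s3, [/\ s = s1 ++ s2 ++ s3, s1 != [::], s2 != [::] &
                       sw_end (sw_end x s1) s2 = sw_end x s1].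
Proof.
elim: s x => [|[y b] s IH] x //=; rewrite negb_and negbK => /orP[/mapP[p p_s ->] | /(IH y)].
  case/splitPr: p_s => s2 s3.
  exists [:: (p.1, b)], (rcons s2 p), s3.
  by split; rewrite ?cat_rcons -?size_eq0 ?size_rcons // /sw_end /= map_rcons last_rcons.
move=> [s1 [s2 [s3 [-> _ s2_nil s2_closed]]]].
by exists ((y, b) :: s1), s2, s3.
Qed.

Definition closed_walks_balanced : Prop :=
  forall x s, is_walk E x s -> sw_end x s = x -> net_voltage rho x s = 1.

Lemma closed_walks_balanced_of_cycles :
  (forall x s, is_cycle E x s -> net_voltage rho x s = 1) ->
  closed_walks_balanced.
Proof.
move=> cycle_balanced x s; have [n] := ubnP (size s).
elim: n x s => // n IH x s; rewrite ltnS => s_small s_walk s_closed.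
have [s_uniq | /(closed_subwalk_of_not_uniq x)] := boolP (uniq (map fst s)).
  by apply: cycle_balanced; rewrite /is_cycle s_walk s_closed eqxx.
move=> [s1 [s2 [s3 [def_s s1_nil s2_nil s2_closed]]]].
have s1_gt0 : 0 < size s1 by rewrite lt0n size_eq0.
have s2_gt0 : 0 < size s2 by rewrite lt0n size_eq0.
have [s2_short s13_short] : size s2 < n /\ size (s1 ++ s3) < n.
  by move: s_small; rewrite def_s !size_cat; lia.
move: s_walk s_closed; rewrite def_s !is_walk_cat !sw_end_cat s2_closed.
move=> /and3P[s1_walk s2_walk s3_walk] s13_closed.
rewrite !net_voltage_cat s2_closed (IH _ s2) // mul1g -net_voltage_cat.
by rewrite IH ?is_walk_cat ?s1_walk ?sw_end_cat.
Qed.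

Section ConnectedGraph.
Hypotheses (E_irr : irreflexive E) (E_connected : strongly_connected E).
Hypothesis walks_balanced : closed_walks_balanced.

Lemma reverse_edge_walk (u v : V) : E u v ->
  exists p, [/\ is_walk E v p, sw_end v p = u &
                net_voltage rho v p = (rho u v)^-1].
Proof.
move=> Euv; have vu : v != u by apply: contraTneq Euv => ->; rewrite E_irr.
have [p [p_walk p_end]] := E_connected vu; exists p; split=> //.
have /= loop1 : net_voltage rho u ((v, true) :: p) = 1.
  by apply: walks_balanced; rewrite // /is_walk /= Euv.
by rewrite -(mulKg (rho u v) (net_voltage rho v p)) loop1 mulg1.
Qed.

Lemma walk_of_semiwalk (x : V) s : semiwalk E x s ->
  exists t, [/\ is_walk E x t, sw_end x t = sw_end x s &
                net_voltage rho x t = net_voltage rho x s].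
Proof.
elim: s x => [|[y [|]] s IH] x /=; first by exists [::].
  move=> /andP[Exy /IH[t [t_walk t_end t_volt]]].
  exists ((y, true) :: t); rewrite /is_walk /= Exy.
  by rewrite /sw_end /= in t_end *; rewrite t_end t_volt.
move=> /andP[Eyx /IH[t [t_walk t_end t_volt]]].
have [p [p_walk p_end p_volt]] := reverse_edge_walk Eyx.
exists (p ++ t); rewrite is_walk_cat sw_end_cat net_voltage_cat p_end.
by rewrite p_walk t_walk t_end p_volt t_volt.
Qed.

End ConnectedGraph.
End VoltageWalks.

Theorem corollary1 (V : finType) (gT : finGroupType)
    (E : rel V) (rho : V -> V -> gT)
    (Hsimple : irreflexive E)
    (Hsc : strongly_connected E) :
  structurally_balanced E rho <->
  (forall x s, is_cycle E x s -> net_voltage rho x s = 1).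
Proof.
split=> [balanced x s /and3P[/andP[s_semiwalk _] /eqP s_closed _] | ].
  exact: balanced.
move=> /closed_walks_balanced_of_cycles walks_balanced x s s_semiwalk s_closed.
have [t [t_walk t_end <-]] := walk_of_semiwalk Hsimple Hsc walks_balanced s_semiwalk.
by apply: walks_balanced; rewrite // t_end.
Qed.
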